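(* Let $r\in[0,\pi/2)$ and suppose $\mathscr A^r$ is invariant for (TVKR). For $i\ne j$ define $c^r_{ij}(t)=[a_{ij}(t)+a_{ji}(t)]\cos r$ if $a_{ij}(t)+a_{ji}(t)>0$ and $c^r_{ij}(t)=a_{ij}(t)+a_{ji}(t)$ otherwise; and $\tilde a^r_{ik}(t)=a_{ik}(t)\cos r$ if $a_{ik}(t)>0$ and $\tilde a^r_{ik}(t)=a_{ik}(t)$ otherwise. Define $$\xi(L(t),r)=-\min_{i\ne j}\Big\{c^r_{ij}(t)+\sum_{k\ne i,j}\min\big(\tilde a^r_{ik}(t),\tilde a^r_{jk}(t)\big)\Big\}.$$ If there exist $T>0$ and $\eta>0$ such that $\frac1T\int_t^{t+T}\xi(L(s),r)\,ds\le-\eta$ for all $t\ge 0$, then the PD trajectories of (TVKR) are exponentially asymptotically stable within $\mathscr A^r$.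
   Context: Consider $m\ge 2$ phase oscillators $\theta=(\theta_1,\dots,\theta_m)\in\mathbb R^m$ governed by (TVKR): $\dot\theta_i=\omega_i(t)+\sum_{j=1}^m a_{ij}(t)\sin(\theta_j-\theta_i)$, $i=1,\dots,m$, where $\omega_i$ and $a_{ij}$ are real-valued, piecewise continuous, bounded functions of $t\ge 0$ with $a_{ii}\equiv 0$; the $a_{ij}$ may be negative. $L(t)$ denotes the Laplacian with $l_{ij}=-a_{ij}$ ($i\ne j$), $l_{ii}=\sum_{j\ne i}a_{ij}$. Write $\theta_{ij}=\theta_i-\theta_j$. For $r\in[0,\pi/2)$, $\mathscr A^{r}=\{(\theta_{ij})_{i>j}: |\theta_{ij}|\le r \text{ for all } i>j\}$; $\mathscr A^r$ is invariant for (TVKR) if every solution whose phase differences lie in $\mathscr A^r$ at $t=0$ has phase differences in $\mathscr A^r$ for all $t\ge0$. The PD trajectories are exponentially asymptotically stable within $\mathscr A^r$ if there exist constants $M,T_0,\epsilon>0$ such that for any two solutions $\phi,\theta$ of (TVKR) whose initial phase differences lie in $\mathscr A^r$, $|\phi_{ij}(t)-\theta_{ij}(t)|\le M\max_{k,l}|\phi_{kl}(0)-\theta_{kl}(0)|e^{-\epsilon t}$ for all $t\ge T_0$ and all $i,j$. *)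

From Stdlib Require Import Reals Lra List.
Import ListNotations.
Open Scope R_scope.

Definition sumR (l : list R) : R := fold_right Rplus 0 l.
Definition listMin (l : list R) : R :=
  match l with nil => 0 | x :: t => fold_right Rmin x t end.
Definition listMax (l : list R) : R :=
  match l with nil => 0 | x :: t => fold_right Rmax x t end.

Definition offdiag_pairs (m : nat) : list (nat * nat) :=
  flat_map (fun i => map (fun j => (i, j))
              (filter (fun j => negb (Nat.eqb i j)) (seq 0 m))) (seq 0 m).

Definition all_pairs (m : nat) : list (nat * nat) :=
  flat_map (fun k => map (fun l => (k, l)) (seq 0 m)) (seq 0 m).

Definition piecewise_continuous (f : R -> R) : Prop :=
  forall T, 0 < T ->
  exists pts : list R,
    (forall t, 0 <= t <= T -> ~ In t pts -> continuity_pt f t) /\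
    (forall t, In t pts ->
       (0 <= t < T -> exists l, limit1_in f (fun x => t < x) l t) /\
       (0 < t <= T -> exists l, limit1_in f (fun x => x < t) l t)).

Definition bounded_on_nonneg (f : R -> R) : Prop :=
  exists B, forall t, 0 <= t -> Rabs (f t) <= B.

Definition tvkr_rhs (m : nat) (omega : nat -> R -> R) (a : nat -> nat -> R -> R)
  (theta : nat -> R -> R) (i : nat) (s : R) : R :=
  omega i s + sumR (map (fun j => a i j s * sin (theta j s - theta i s)) (seq 0 m)).

(** theta is a (Caratheodory) solution of (TVKR) on [0,+oo):
    theta_i(t) = theta_i(0) + \int_0^t rhs_i(s) ds for all t >= 0, i < m. *)
Definition is_solution (m : nat) (omega : nat -> R -> R) (a : nat -> nat -> R -> R)
  (theta : nat -> R -> R) : Prop :=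
  forall i, (i < m)%nat -> forall t, 0 <= t ->
    exists pr : Riemann_integrable (tvkr_rhs m omega a theta i) 0 t,
      theta i t = theta i 0 + RiemannInt pr.

Definition PD_in (m : nat) (r : R) (theta : nat -> R -> R) (t : R) : Prop :=
  forall i j, (j < i < m)%nat -> Rabs (theta i t - theta j t) <= r.

Definition invariant_Ar (m : nat) (omega : nat -> R -> R) (a : nat -> nat -> R -> R)
  (r : R) : Prop :=
  forall theta, is_solution m omega a theta -> PD_in m r theta 0 ->
    forall t, 0 <= t -> PD_in m r theta t.

Definition init_PD_dist (m : nat) (phi theta : nat -> R -> R) : R :=
  listMax (map (fun p : nat * nat =>
     Rabs ((phi (fst p) 0 - phi (snd p) 0) - (theta (fst p) 0 - theta (snd p) 0)))
     (all_pairs m)).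

Definition PD_exp_stable (m : nat) (omega : nat -> R -> R) (a : nat -> nat -> R -> R)
  (r : R) : Prop :=
  exists M T0 eps, 0 < M /\ 0 < T0 /\ 0 < eps /\
    forall phi theta,
      is_solution m omega a phi -> is_solution m omega a theta ->
      PD_in m r phi 0 -> PD_in m r theta 0 ->
      forall t, T0 <= t -> forall i j, (i < m)%nat -> (j < m)%nat ->
        Rabs ((phi i t - phi j t) - (theta i t - theta j t))
          <= M * init_PD_dist m phi theta * exp (- eps * t).

Definition c_r (a : nat -> nat -> R -> R) (r : R) (i j : nat) (t : R) : R :=
  let s := a i j t + a j i t in
  if Rlt_dec 0 s then s * cos r else s.

Definition atilde_r (a : nat -> nat -> R -> R) (r : R) (i k : nat) (t : R) : R :=
  if Rlt_dec 0 (a i k t) then a i k t * cos r else a i k t.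

Definition xi (m : nat) (a : nat -> nat -> R -> R) (r : R) (t : R) : R :=
  - listMin (map (fun p : nat * nat =>
      let i := fst p in let j := snd p in
      c_r a r i j t +
      sumR (map (fun k => Rmin (atilde_r a r i k t) (atilde_r a r j k t))
              (filter (fun k => andb (negb (Nat.eqb k i)) (negb (Nat.eqb k j))) (seq 0 m))))
    (offdiag_pairs m)).

From Stdlib Require Import Reals Lra Lia List ClassicalEpsilon.
Import ListNotations.
Open Scope R_scope.

(* Fix two solutions [phi], [theta] and let [D t] be the largest gap
   [|(phi_i - phi_j) - (theta_i - theta_j)|].  If the pair [(i, j)] realises
   [D], then [i] and [j] are the oscillators where [phi - theta] is maximal and
   minimal.  Writing every sine difference as [cos c] times a gap difference,
   with [cos c] in [[cos r, 1]] because all phase differences stay in [A^r],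
   shows that the gap of [(i, j)] grows at rate at most [xi t * D t].  As [D] is
   only Lipschitz, this is done on short time steps:
   [D y <= D x (1 + Phi y - Phi x) + O((y - x)^2)] with [Phi] a primitive of
   [xi].  A discrete Gronwall argument gives [D t <= D 0 exp (Phi t - Phi 0)],
   and the averaging hypothesis bounds [Phi t - Phi 0] by [- eta t + const]. *)

Lemma Rabs_le_inv (x y : R) : Rabs x <= y -> - y <= x <= y.
Proof. unfold Rabs; destruct Rcase_abs; lra. Qed.

Lemma Rmult_le_Rabs (p q P Q : R) : Rabs p <= P -> Rabs q <= Q -> p * q <= P * Q.
Proof.
  intros Hp Hq. apply Rle_trans with (Rabs (p * q)); [apply Rle_abs |].
  rewrite Rabs_mult. apply Rmult_le_compat; auto; apply Rabs_pos.
Qed.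

Lemma exp_le_compat (x y : R) : x <= y -> exp x <= exp y.
Proof. intros [Hlt | ->]; [left; apply exp_increasing; exact Hlt | lra]. Qed.

Lemma cos_bounds (r : R) : 0 <= r < PI / 2 -> 0 <= cos r <= 1.
Proof. split; [apply cos_ge_0; lra | apply COS_bound]. Qed.

Lemma fold_Rmax_ge (t : list R) (x : R) :
  x <= fold_right Rmax x t /\ forall y, In y t -> y <= fold_right Rmax x t.
Proof.
  induction t as [| z t [IHx IHt]]; simpl; [split; [lra | tauto] |].
  split; [eapply Rle_trans; [apply IHx | apply Rmax_r] |].
  intros y [<- | Hy]; [apply Rmax_l | eapply Rle_trans; [apply IHt; auto | apply Rmax_r]].
Qed.

Lemma fold_Rmax_In (t : list R) (x : R) : In (fold_right Rmax x t) (x :: t).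
Proof.
  induction t as [| z t IH]; simpl; [auto |].
  destruct (Rle_dec z (fold_right Rmax x t)).
  - rewrite Rmax_right by exact r. destruct IH; auto.
  - rewrite Rmax_left by lra. auto.
Qed.

Lemma fold_Rmin_le (t : list R) (x : R) :
  fold_right Rmin x t <= x /\ forall y, In y t -> fold_right Rmin x t <= y.
Proof.
  induction t as [| z t [IHx IHt]]; simpl; [split; [lra | tauto] |].
  split; [eapply Rle_trans; [apply Rmin_r | apply IHx] |].
  intros y [<- | Hy]; [apply Rmin_l | eapply Rle_trans; [apply Rmin_r | apply IHt; auto]].
Qed.

Lemma fold_Rmin_In (t : list R) (x : R) : In (fold_right Rmin x t) (x :: t).
Proof.
  induction t as [| z t IH]; simpl; [auto |].
  destruct (Rle_dec z (fold_right Rmin x t)).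
  - rewrite Rmin_left by exact r. auto.
  - rewrite Rmin_right by lra. destruct IH; auto.
Qed.

Lemma listMax_ge (l : list R) (y : R) : In y l -> y <= listMax l.
Proof.
  destruct l as [| x t]; simpl; [tauto |].
  intros [<- | Hy]; [apply (proj1 (fold_Rmax_ge t x)) | apply (proj2 (fold_Rmax_ge t x)), Hy].
Qed.

Lemma listMax_In (l : list R) : l <> [] -> In (listMax l) l.
Proof. destruct l as [| x t]; [tauto | intros _; apply fold_Rmax_In]. Qed.

Lemma listMin_le (l : list R) (y : R) : In y l -> listMin l <= y.
Proof.
  destruct l as [| x t]; simpl; [tauto |].
  intros [<- | Hy]; [apply (proj1 (fold_Rmin_le t x)) | apply (proj2 (fold_Rmin_le t x)), Hy].
Qed.

Lemma Rabs_listMin_le (l : list R) (X : R) :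
  0 <= X -> (forall x, In x l -> Rabs x <= X) -> Rabs (listMin l) <= X.
Proof.
  intros HX Hl. destruct l as [| x t]; [simpl; rewrite Rabs_R0; exact HX |].
  apply Hl, fold_Rmin_In.
Qed.

Section SumR.
Context {A : Type}.

Lemma sumR_map_ext (f g : A -> R) (l : list A) :
  (forall x, In x l -> f x = g x) -> sumR (map f l) = sumR (map g l).
Proof. induction l; simpl; intros H; [reflexivity | rewrite H, IHl; auto]. Qed.

Lemma sumR_map_sub (f g : A -> R) (l : list A) :
  sumR (map f l) - sumR (map g l) = sumR (map (fun x => f x - g x) l).
Proof. induction l; simpl; [lra | rewrite <- IHl; lra]. Qed.

Lemma sumR_map_le (f g : A -> R) (l : list A) :
  (forall x, In x l -> f x <= g x) -> sumR (map f l) <= sumR (map g l).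
Proof. induction l; simpl; intros H; [lra | apply Rplus_le_compat; auto]. Qed.

Lemma Rabs_sumR_map_le (f : A -> R) (l : list A) (c : R) :
  (forall x, In x l -> Rabs (f x) <= c) -> Rabs (sumR (map f l)) <= INR (length l) * c.
Proof.
  induction l as [| x l IH]; simpl length; rewrite ?S_INR; simpl; intros H.
  - rewrite Rabs_R0; lra.
  - eapply Rle_trans; [apply Rabs_triang |].
    assert (Rabs (f x) <= c) by auto. assert (Rabs (sumR (map f l)) <= INR (length l) * c) by auto.
    lra.
Qed.

Lemma sumR_map_affine (g : A -> R) (u c : R) (l : list A) :
  sumR (map (fun k => - g k * u + c) l) = - sumR (map g l) * u + INR (length l) * c.
Proof. induction l; simpl length; rewrite ?S_INR; simpl; [lra | rewrite IHl; ring]. Qed.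

End SumR.

Lemma sumR_map_remove (F : nat -> R) (l : list nat) (i : nat) : NoDup l -> In i l ->
  sumR (map F l) = F i + sumR (map F (filter (fun k => negb (Nat.eqb k i)) l)).
Proof.
  induction l as [| x l IH]; simpl; [tauto |]. intros Hnd Hin. inversion Hnd; subst.
  destruct (Nat.eqb_spec x i) as [-> | Hne]; simpl.
  - do 3 f_equal. symmetry. apply forallb_filter_id, forallb_forall.
    intros y Hy. destruct (Nat.eqb_spec y i); subst; [tauto | reflexivity].
  - destruct Hin as [-> | Hin]; [tauto |]. rewrite IH; auto. lra.
Qed.

Lemma filter_filter {A : Type} (p q : A -> bool) (l : list A) :
  filter p (filter q l) = filter (fun x => andb (q x) (p x)) l.
Proof.
  induction l as [| x l IH]; simpl; [reflexivity |].
  destruct (q x); simpl; [destruct (p x); simpl; [f_equal |] |]; exact IH.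
Qed.

Definition other_indices (m i j : nat) : list nat :=
  filter (fun k => andb (negb (Nat.eqb k i)) (negb (Nat.eqb k j))) (seq 0 m).

Lemma sumR_map_seq_remove2 (F : nat -> R) (m i j : nat) :
  (i < m)%nat -> (j < m)%nat -> i <> j ->
  sumR (map F (seq 0 m)) = F i + F j + sumR (map F (other_indices m i j)).
Proof.
  intros Hi Hj Hij. unfold other_indices.
  rewrite (sumR_map_remove F _ i) by (apply seq_NoDup || (apply in_seq; lia)).
  rewrite (sumR_map_remove F _ j), filter_filter; [lra | apply NoDup_filter, seq_NoDup |].
  apply filter_In. split; [apply in_seq; lia |].
  destruct (Nat.eqb_spec j i); [congruence | reflexivity].
Qed.

Lemma In_other_indices (m i j k : nat) : In k (other_indices m i j) -> (k < m)%nat.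
Proof.
  unfold other_indices. intros Hk. apply filter_In in Hk. destruct Hk as [Hk _].
  apply in_seq in Hk. lia.
Qed.

Lemma length_other_indices (m i j : nat) : INR (length (other_indices m i j)) <= INR m.
Proof. apply le_INR. eapply Nat.le_trans; [apply filter_length_le | rewrite length_seq; lia]. Qed.

Lemma In_offdiag_pairs (m i j : nat) :
  (i < m)%nat -> (j < m)%nat -> i <> j -> In (i, j) (offdiag_pairs m).
Proof.
  intros Hi Hj Hij. apply in_flat_map. exists i. split; [apply in_seq; lia |].
  apply in_map, filter_In. split; [apply in_seq; lia |].
  destruct (Nat.eqb_spec i j); [congruence | reflexivity].
Qed.

Lemma offdiag_pairs_bound (m : nat) (p : nat * nat) :
  In p (offdiag_pairs m) -> (fst p < m)%nat /\ (snd p < m)%nat.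
Proof.
  intros Hp. apply in_flat_map in Hp. destruct Hp as [i [Hi Hp]].
  apply in_map_iff in Hp. destruct Hp as [j [<- Hj]]. apply filter_In in Hj.
  destruct Hj as [Hj _]. apply in_seq in Hi. apply in_seq in Hj. simpl. lia.
Qed.

Lemma In_all_pairs (m k l : nat) : (k < m)%nat -> (l < m)%nat -> In (k, l) (all_pairs m).
Proof.
  intros Hk Hl. apply in_flat_map. exists k. split; [apply in_seq; lia |].
  apply in_map, in_seq. lia.
Qed.

Lemma all_pairs_bound (m : nat) (p : nat * nat) :
  In p (all_pairs m) -> (fst p < m)%nat /\ (snd p < m)%nat.
Proof.
  intros Hp. apply in_flat_map in Hp. destruct Hp as [k [Hk Hp]].
  apply in_map_iff in Hp. destruct Hp as [l [<- Hl]].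
  apply in_seq in Hk. apply in_seq in Hl. simpl. lia.
Qed.

Lemma uniform_bound_fin (n : nat) (P : nat -> R -> Prop) :
  (forall i B B', P i B -> B <= B' -> P i B') ->
  (forall i, (i < n)%nat -> exists B, P i B) ->
  exists B, 0 <= B /\ forall i, (i < n)%nat -> P i B.
Proof.
  intros Hmono. induction n as [| n IH]; intros Hex.
  - exists 0. split; [lra | intros; lia].
  - destruct IH as [B1 [HB1 H1]]; [intros i Hi; apply Hex; lia |].
    destruct (Hex n ltac:(lia)) as [B2 H2]. exists (Rmax B1 B2).
    split; [eapply Rle_trans; [exact HB1 | apply Rmax_l] |].
    intros i Hi. destruct (Nat.eq_dec i n) as [-> | Hne].
    + eapply Hmono; [exact H2 | apply Rmax_r].
    + eapply Hmono; [apply H1; lia | apply Rmax_l].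
Qed.

Lemma PD_in_all (m : nat) (r : R) (theta : nat -> R -> R) (t : R) :
  0 <= r -> PD_in m r theta t ->
  forall k l, (k < m)%nat -> (l < m)%nat -> Rabs (theta k t - theta l t) <= r.
Proof.
  intros Hr H k l Hk Hl. destruct (Nat.lt_trichotomy k l) as [Hkl | [-> | Hkl]].
  - rewrite Rabs_minus_sym. apply H. lia.
  - unfold Rminus. rewrite Rplus_opp_r, Rabs_R0. exact Hr.
  - apply H. lia.
Qed.

(** * Damped coefficients and the sine increment *)

Definition damp (rho A : R) : R := if Rlt_dec 0 A then A * rho else A.

Lemma c_r_damp (a : nat -> nat -> R -> R) (r : R) (i j : nat) (t : R) :
  c_r a r i j t = damp (cos r) (a i j t + a j i t).
Proof. reflexivity. Qed.

Lemma atilde_r_damp (a : nat -> nat -> R -> R) (r : R) (i k : nat) (t : R) :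
  atilde_r a r i k t = damp (cos r) (a i k t).
Proof. reflexivity. Qed.

Lemma Rabs_damp_le (rho A : R) : 0 <= rho <= 1 -> Rabs (damp rho A) <= Rabs A.
Proof.
  intros Hrho. unfold damp. destruct Rlt_dec; [| lra].
  rewrite Rabs_mult, (Rabs_right rho) by lra. pose proof (Rabs_pos A). nra.
Qed.

(* The mean-value factor [c] is replaced by its worst case, [rho] for positive
   and [1] for nonpositive coefficients; this is free when [e <= 0] and costs
   [Bd * eps] otherwise. *)
Lemma mul_factor_le_damp (rho c A Bd e eps : R) :
  0 <= rho <= c -> c <= 1 -> Rabs A <= Bd -> e <= eps -> 0 <= eps ->
  A * c * e <= damp rho A * e + Bd * eps.
Proof.
  intros [Hrho Hc] Hc1 HA He Heps. apply Rabs_le_inv in HA. unfold damp.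
  assert (0 <= Bd * eps) by nra.
  destruct (Rlt_dec 0 A) as [Hpos | Hneg]; [| apply Rnot_lt_le in Hneg];
    destruct (Rle_lt_dec e 0) as [Hle | Hgt].
  - assert (A * (c - rho) * e <= 0) by (assert (0 <= A * (c - rho)) by nra; nra). nra.
  - assert (0 <= A * e) by nra. assert (A * e * (1 - c) >= 0) by nra.
    assert (A * (1 - rho) * e <= Bd * eps) by (apply Rmult_le_compat; nra). nra.
  - assert (0 <= A * e) by nra. assert (A * e * (1 - c) >= 0) by nra. lra.
  - assert (- A * (1 - c) * e <= Bd * eps) by (apply Rmult_le_compat; nra). nra.
Qed.

Lemma Rmin_coupling_le (a1 a2 x y B eps : R) :
  Rabs a1 <= B -> Rabs a2 <= B -> - eps <= x -> - eps <= y -> 0 <= eps ->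
  - a1 * x - a2 * y <= - Rmin a1 a2 * (x + y) + 2 * B * eps.
Proof.
  intros H1 H2 Hx Hy He. apply Rabs_le_inv in H1. apply Rabs_le_inv in H2.
  unfold Rmin. destruct Rle_dec.
  - assert ((a1 - a2) * y <= (a2 - a1) * eps) by nra. nra.
  - assert ((a2 - a1) * x <= (a1 - a2) * eps) by nra. nra.
Qed.

Lemma sin_sub_cos_factor (x y r : R) : 0 <= r < PI / 2 -> Rabs x <= r -> Rabs y <= r ->
  exists c, cos r <= c <= 1 /\ sin x - sin y = c * (x - y).
Proof.
  intros Hr Hx Hy.
  assert (Hcos : forall z, Rabs z <= r -> cos r <= cos z <= 1).
  { intros z Hz. split; [| apply COS_bound].
    assert (Hz' := Rabs_le_inv _ _ Hz). pose proof PI_RGT_0.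
    destruct (Rle_lt_dec 0 z).
    - apply cos_decr_1; lra.
    - rewrite <- (cos_neg z). apply cos_decr_1; lra. }
  apply Rabs_le_inv in Hx. apply Rabs_le_inv in Hy.
  destruct (Rtotal_order y x) as [Hyx | [-> | Hxy]].
  - destruct (MVT_cor2 sin cos y x) as [c [E Hc]];
      [exact Hyx | intros; apply derivable_pt_lim_sin |].
    exists (cos c). split; [apply Hcos, Rabs_le; lra | exact E].
  - exists 1. split; [split; [apply COS_bound | lra] | ring].
  - destruct (MVT_cor2 sin cos x y) as [c [E Hc]];
      [exact Hxy | intros; apply derivable_pt_lim_sin |].
    exists (cos c). split; [apply Hcos, Rabs_le; lra | lra].
Qed.

(** * The coupling estimate *)

Definition xi_pair (m : nat) (a : nat -> nat -> R -> R) (r t : R) (p : nat * nat) : R :=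
  c_r a r (fst p) (snd p) t +
  sumR (map (fun k => Rmin (atilde_r a r (fst p) k t) (atilde_r a r (snd p) k t))
          (other_indices m (fst p) (snd p))).

Lemma xi_eq (m : nat) (a : nat -> nat -> R -> R) (r t : R) :
  xi m a r t = - listMin (map (xi_pair m a r t) (offdiag_pairs m)).
Proof. reflexivity. Qed.

Section XiBound.
Variables (m : nat) (a : nat -> nat -> R -> R) (r t B : R).
Hypotheses (Hr : 0 <= r < PI / 2) (HB : 0 <= B)
  (Ha : forall k l, (k < m)%nat -> (l < m)%nat -> Rabs (a k l t) <= B).

Lemma Rabs_xi_pair_le (p : nat * nat) :
  In p (offdiag_pairs m) -> Rabs (xi_pair m a r t p) <= (2 + INR m) * B.
Proof.
  intros Hp. destruct (offdiag_pairs_bound m p Hp) as [Hi Hj].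
  pose proof (cos_bounds r Hr) as Hcos.
  unfold xi_pair. eapply Rle_trans; [apply Rabs_triang |].
  rewrite Rmult_plus_distr_r. apply Rplus_le_compat.
  - rewrite c_r_damp. eapply Rle_trans; [apply Rabs_damp_le; exact Hcos |].
    eapply Rle_trans; [apply Rabs_triang |].
    pose proof (Ha _ _ Hi Hj). pose proof (Ha _ _ Hj Hi). lra.
  - eapply Rle_trans; [apply Rabs_sumR_map_le with (c := B) |].
    + intros k Hk. pose proof (In_other_indices _ _ _ _ Hk) as Hkm.
      rewrite !atilde_r_damp.
      assert (H1 := Rle_trans _ _ _ (Rabs_damp_le _ (a (fst p) k t) Hcos) (Ha _ _ Hi Hkm)).
      assert (H2 := Rle_trans _ _ _ (Rabs_damp_le _ (a (snd p) k t) Hcos) (Ha _ _ Hj Hkm)).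
      apply Rabs_le_inv in H1. apply Rabs_le_inv in H2.
      apply Rabs_le. unfold Rmin. destruct Rle_dec; lra.
    + apply Rmult_le_compat_r; [exact HB | apply length_other_indices].
Qed.

Lemma Rabs_xi_le : Rabs (xi m a r t) <= (2 + INR m) * B.
Proof.
  rewrite xi_eq, Rabs_Ropp. apply Rabs_listMin_le; [pose proof (pos_INR m); nra |].
  intros x Hx. apply in_map_iff in Hx. destruct Hx as [p [<- Hp]].
  apply Rabs_xi_pair_le, Hp.
Qed.

End XiBound.

Section CouplingEstimate.
Variables (m : nat) (omega : nat -> R -> R) (a : nat -> nat -> R -> R) (r B s eps : R)
  (phi theta : nat -> R -> R) (i j : nat).
Hypotheses (Hr : 0 <= r < PI / 2) (HB : 0 <= B)
  (Ha : forall k l, (k < m)%nat -> (l < m)%nat -> Rabs (a k l s) <= B)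
  (Hdiag : forall k, (k < m)%nat -> a k k s = 0)
  (Hphi : forall k l, (k < m)%nat -> (l < m)%nat -> Rabs (phi k s - phi l s) <= r)
  (Htheta : forall k l, (k < m)%nat -> (l < m)%nat -> Rabs (theta k s - theta l s) <= r)
  (Hi : (i < m)%nat) (Hj : (j < m)%nat) (Hij : i <> j) (Heps : 0 <= eps).

Local Notation d k := (phi k s - theta k s).
Local Notation u := (d i - d j).

(* [i] and [j] are, up to [eps], the oscillators where the gap [d] is maximal
   and minimal. *)
Hypotheses (Hmax : forall k, (k < m)%nat -> d k - d i <= eps)
  (Hmin : forall k, (k < m)%nat -> d j - d k <= eps).

Let rhs_gap_term (k : nat) : R :=
  a i k s * (sin (phi k s - phi i s) - sin (theta k s - theta i s))
  - a j k s * (sin (phi k s - phi j s) - sin (theta k s - theta j s)).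

Lemma rhs_gap_split :
  (tvkr_rhs m omega a phi i s - tvkr_rhs m omega a theta i s)
  - (tvkr_rhs m omega a phi j s - tvkr_rhs m omega a theta j s)
  = rhs_gap_term i + rhs_gap_term j + sumR (map rhs_gap_term (other_indices m i j)).
Proof.
  rewrite <- sumR_map_seq_remove2 by assumption. unfold tvkr_rhs.
  match goal with |- ?w1 + ?S1 - (?w1 + ?S2) - (?w2 + ?S3 - (?w2 + ?S4)) = _ =>
    replace (w1 + S1 - (w1 + S2) - (w2 + S3 - (w2 + S4))) with ((S1 - S2) - (S3 - S4)) by ring end.
  rewrite !sumR_map_sub. apply sumR_map_ext. intros k _. unfold rhs_gap_term. ring.
Qed.

Lemma pair_terms_le : rhs_gap_term i + rhs_gap_term j <= c_r a r i j s * (- u) + 2 * B * eps.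
Proof.
  destruct (sin_sub_cos_factor (phi j s - phi i s) (theta j s - theta i s) r Hr)
    as [c [Hc E]]; [auto | auto |].
  assert (Hpair : rhs_gap_term i + rhs_gap_term j = (a i j s + a j i s) * c * (- u)).
  { unfold rhs_gap_term. rewrite !Hdiag by assumption.
    replace (phi i s - phi j s) with (- (phi j s - phi i s)) by ring.
    replace (theta i s - theta j s) with (- (theta j s - theta i s)) by ring.
    rewrite !sin_neg. nra. }
  rewrite Hpair, c_r_damp. apply mul_factor_le_damp; try lra.
  - pose proof (cos_bounds r Hr). lra.
  - eapply Rle_trans; [apply Rabs_triang |].
    pose proof (Ha _ _ Hi Hj). pose proof (Ha _ _ Hj Hi). lra.
  - pose proof (Hmax j Hj). lra.
Qed.

Lemma other_term_le (k : nat) : In k (other_indices m i j) ->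
  rhs_gap_term k <= - Rmin (atilde_r a r i k s) (atilde_r a r j k s) * u + 4 * B * eps.
Proof.
  intros Hk. pose proof (In_other_indices _ _ _ _ Hk) as Hkm.
  pose proof (cos_bounds r Hr) as Hcos.
  destruct (sin_sub_cos_factor (phi k s - phi i s) (theta k s - theta i s) r Hr)
    as [c1 [Hc1 E1]]; [auto | auto |].
  destruct (sin_sub_cos_factor (phi k s - phi j s) (theta k s - theta j s) r Hr)
    as [c2 [Hc2 E2]]; [auto | auto |].
  unfold rhs_gap_term. rewrite E1, E2.
  rewrite !atilde_r_damp.
  assert (T1 := mul_factor_le_damp (cos r) c1 (a i k s) B (d k - d i) eps
                  ltac:(lra) ltac:(lra) (Ha _ _ Hi Hkm) (Hmax k Hkm) Heps).
  assert (T2 := mul_factor_le_damp (cos r) c2 (a j k s) B (d j - d k) eps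
                  ltac:(lra) ltac:(lra) (Ha _ _ Hj Hkm) (Hmin k Hkm) Heps).
  assert (T3 := Rmin_coupling_le (damp (cos r) (a i k s)) (damp (cos r) (a j k s))
                  (d i - d k) (d k - d j) B eps
                  (Rle_trans _ _ _ (Rabs_damp_le _ _ Hcos) (Ha _ _ Hi Hkm))
                  (Rle_trans _ _ _ (Rabs_damp_le _ _ Hcos) (Ha _ _ Hj Hkm))
                  ltac:(pose proof (Hmax k Hkm); lra) ltac:(pose proof (Hmin k Hkm); lra) Heps).
  replace (phi k s - phi i s - (theta k s - theta i s)) with (d k - d i) by ring.
  replace (phi k s - phi j s - (theta k s - theta j s)) with (- (d j - d k)) by ring.
  replace u with ((d i - d k) + (d k - d j)) by ring.
  lra.
Qed.

Lemma rhs_gap_le_xi_pair :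
  (tvkr_rhs m omega a phi i s - tvkr_rhs m omega a theta i s)
  - (tvkr_rhs m omega a phi j s - tvkr_rhs m omega a theta j s)
  <= - xi_pair m a r s (i, j) * u + (2 + 4 * INR m) * B * eps.
Proof.
  rewrite rhs_gap_split.
  assert (Hother := sumR_map_le _ _ _ other_term_le). rewrite sumR_map_affine in Hother.
  assert (INR (length (other_indices m i j)) * (4 * B * eps) <= INR m * (4 * B * eps))
    by (apply Rmult_le_compat_r; [nra | apply length_other_indices]).
  pose proof pair_terms_le. unfold xi_pair; simpl fst; simpl snd. lra.
Qed.

(* Replacing [xi_pair (i, j)] by the minimum [- xi] over all pairs costs only a
   multiple of [eps], because [u] is negative by at most [eps]. *)
Lemma rhs_gap_le_xi :
  (tvkr_rhs m omega a phi i s - tvkr_rhs m omega a theta i s)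
  - (tvkr_rhs m omega a phi j s - tvkr_rhs m omega a theta j s)
  <= xi m a r s * u + 6 * (1 + INR m) * B * eps.
Proof.
  set (l := map (xi_pair m a r s) (offdiag_pairs m)).
  assert (Hin : In (i, j) (offdiag_pairs m)) by (apply In_offdiag_pairs; assumption).
  assert (Hmin_le : listMin l <= xi_pair m a r s (i, j)) by (apply listMin_le, in_map, Hin).
  assert (Hpair := Rabs_le_inv _ _ (Rabs_xi_pair_le m a r s B Hr HB Ha _ Hin)).
  assert (Hl := Rabs_le_inv _ _ (Rabs_xi_le m a r s B Hr HB Ha)). rewrite xi_eq in Hl |- *.
  fold l in Hl |- *.
  assert (Hu : - eps <= u) by (pose proof (Hmax j Hj); lra).
  set (w := xi_pair m a r s (i, j) - listMin l).
  assert (- w * u <= 2 * ((2 + INR m) * B) * eps)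
    by (assert (0 <= w <= 2 * ((2 + INR m) * B)) by (unfold w; lra); nra).
  pose proof rhs_gap_le_xi_pair. unfold w in *. nra.
Qed.

End CouplingEstimate.

(** * Riemann integrals on [[0, +oo)] *)

Lemma integrable_of_windows (f : R -> R) (T : R) :
  0 < T -> (forall t, 0 <= t -> Riemann_integrable f t (t + T)) ->
  forall x y, 0 <= x <= y -> Riemann_integrable f x y.
Proof.
  intros HT HW.
  assert (Hgrid : forall n : nat, Riemann_integrable f 0 (INR n * T)).
  { induction n as [| n IH].
    - rewrite Rmult_0_l. apply (RiemannInt_P22 (HW 0 (Rle_refl 0))). lra.
    - rewrite S_INR, Rmult_plus_distr_r, Rmult_1_l.
      apply (RiemannInt_P24 IH), HW. pose proof (pos_INR n). nra. }
  intros x y Hxy.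
  destruct (constructive_indefinite_description _ (INR_archimed T y HT)) as [n Hn].
  apply (@RiemannInt_P23 f 0 y x); [| lra].
  apply (RiemannInt_P22 (Hgrid n)). lra.
Qed.

Lemma primitive_exists (f : R -> R) :
  (forall x y, 0 <= x <= y -> Riemann_integrable f x y) ->
  exists Phi : R -> R, forall x y, 0 <= x <= y -> forall pr : Riemann_integrable f x y,
    Phi y - Phi x = RiemannInt pr.
Proof.
  intros HI.
  exists (fun x => RiemannInt (HI 0 (Rmax x 0) (conj (Rle_refl 0) (Rmax_r x 0)))).
  assert (HP : forall x, 0 <= x -> forall pr : Riemann_integrable f 0 x,
    RiemannInt (HI 0 (Rmax x 0) (conj (Rle_refl 0) (Rmax_r x 0))) = RiemannInt pr).
  { intros x Hx pr. generalize (HI 0 (Rmax x 0) (conj (Rle_refl 0) (Rmax_r x 0))).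
    rewrite Rmax_left by exact Hx. intros pr'. apply RiemannInt_P5. }
  intros x y Hxy pr.
  set (pry := HI 0 y ltac:(lra)).
  set (prx := RiemannInt_P22 pry (conj (proj1 Hxy) (proj2 Hxy)) : Riemann_integrable f 0 x).
  rewrite (HP y ltac:(lra) pry), (HP x ltac:(lra) prx), <- (RiemannInt_P26 prx pr pry). ring.
Qed.

Lemma Rabs_RiemannInt_le_const (f : R -> R) (x y c : R) (pr : Riemann_integrable f x y) :
  x <= y -> (forall s, x < s < y -> Rabs (f s) <= c) -> Rabs (RiemannInt pr) <= c * (y - x).
Proof.
  intros Hxy Hf. eapply Rle_trans; [apply (RiemannInt_P17 pr (RiemannInt_P16 pr) Hxy) |].
  rewrite <- (RiemannInt_P15 (RiemannInt_P14 x y c)). apply RiemannInt_P19; assumption.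
Qed.

Lemma RiemannInt_le_affine (f g : R -> R) (x y alpha c : R)
  (prf : Riemann_integrable f x y) (prg : Riemann_integrable g x y) :
  x <= y -> (forall s, x < s < y -> f s <= alpha * g s + c) ->
  RiemannInt prf <= alpha * RiemannInt prg + c * (y - x).
Proof.
  intros Hxy Hf.
  set (pr := RiemannInt_P10 alpha (RiemannInt_P14 x y c) prg).
  rewrite <- (RiemannInt_P15 (RiemannInt_P14 x y c)), Rplus_comm, <- (RiemannInt_P13 _ _ pr).
  apply RiemannInt_P19; [exact Hxy |]. intros s Hs. unfold fct_cte. rewrite Rplus_comm. auto.
Qed.

Lemma primitive_lipschitz (f Phi : R -> R) (X : R) :
  (forall x y, 0 <= x <= y ->
     exists pr : Riemann_integrable f x y, Phi y - Phi x = RiemannInt pr) ->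
  (forall s, 0 <= s -> Rabs (f s) <= X) ->
  forall x y, 0 <= x <= y -> Rabs (Phi y - Phi x) <= X * (y - x).
Proof.
  intros HPhi Hf x y Hxy. destruct (HPhi x y Hxy) as [pr ->].
  apply Rabs_RiemannInt_le_const; [lra |]. intros s Hs. apply Hf. lra.
Qed.

Lemma primitive_window_decay (Phi : R -> R) (X T eta : R) :
  0 < T -> 0 <= eta -> 0 <= X ->
  (forall x y, 0 <= x <= y -> Phi y - Phi x <= X * (y - x)) ->
  (forall t, 0 <= t -> Phi (t + T) - Phi t <= - eta * T) ->
  forall t, 0 <= t -> Phi t - Phi 0 <= - eta * t + (eta + X) * T.
Proof.
  intros HT Heta HX Hlip Hwin.
  assert (Hgrid : forall (n : nat) t, 0 <= t <= INR n * T ->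
    Phi t - Phi 0 <= - eta * t + (eta + X) * T).
  { induction n as [| n IH]; intros t Ht.
    - simpl in Ht. replace t with 0 by lra. nra.
    - destruct (Rle_dec t T).
      + pose proof (Hlip 0 t ltac:(lra)). nra.
      + rewrite S_INR in Ht. pose proof (IH (t - T) ltac:(lra)).
        pose proof (Hwin (t - T) ltac:(lra)). replace (t - T + T) with t in * by ring. nra. }
  intros t Ht. destruct (INR_archimed T t HT) as [n Hn]. apply (Hgrid n). lra.
Qed.

Lemma window_average_primitive (f : R -> R) (T eta X : R) :
  0 < T -> 0 <= eta -> 0 <= X -> (forall s, 0 <= s -> Rabs (f s) <= X) ->
  (forall t, 0 <= t -> exists pr : Riemann_integrable f t (t + T), / T * RiemannInt pr <= - eta) ->
  exists Phi : R -> R,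
    (forall x y, 0 <= x <= y ->
       exists pr : Riemann_integrable f x y, Phi y - Phi x = RiemannInt pr) /\
    (forall t, 0 <= t -> Phi t - Phi 0 <= - eta * t + (eta + X) * T).
Proof.
  intros HT Heta HX Hf Hwin.
  assert (Hint := integrable_of_windows f T HT
    (fun t Ht => proj1_sig (constructive_indefinite_description _ (Hwin t Ht)))).
  destruct (primitive_exists f Hint) as [Phi HPhi].
  assert (HPhi' : forall x y, 0 <= x <= y ->
    exists pr : Riemann_integrable f x y, Phi y - Phi x = RiemannInt pr)
    by (intros x y Hxy; exists (Hint x y Hxy); apply (HPhi x y Hxy)).
  exists Phi. split; [exact HPhi' |].
  apply primitive_window_decay; try assumption.
  - intros x y Hxy. exact (proj2 (Rabs_le_inv _ _ (primitive_lipschitz f Phi X HPhi' Hf x y Hxy))).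
  - intros t Ht. destruct (Hwin t Ht) as [pr Hpr]. rewrite (HPhi t (t + T) ltac:(lra) pr).
    replace (RiemannInt pr) with (T * (/ T * RiemannInt pr)) by (field; lra). nra.
Qed.

(** * Solutions and phase-difference gaps *)

Lemma solution_increment (m : nat) (omega : nat -> R -> R) (a : nat -> nat -> R -> R)
  (phi : nat -> R -> R) (i : nat) :
  is_solution m omega a phi -> (i < m)%nat ->
  forall x y, 0 <= x <= y -> exists pr : Riemann_integrable (tvkr_rhs m omega a phi i) x y,
    phi i y - phi i x = RiemannInt pr.
Proof.
  intros Hsol Hi x y Hxy.
  destruct (Hsol i Hi y ltac:(lra)) as [pry Ey]. destruct (Hsol i Hi x ltac:(lra)) as [prx Ex].
  set (pr := RiemannInt_P23 pry Hxy). exists pr.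
  rewrite Ey, Ex, <- (RiemannInt_P26 prx pr pry). ring.
Qed.

Definition pd_gap (phi theta : nat -> R -> R) (i j : nat) (t : R) : R :=
  (phi i t - phi j t) - (theta i t - theta j t).

Definition pd_gap_rate (m : nat) (omega : nat -> R -> R) (a : nat -> nat -> R -> R)
  (phi theta : nat -> R -> R) (i j : nat) (s : R) : R :=
  (tvkr_rhs m omega a phi i s + -1 * tvkr_rhs m omega a theta i s)
  + -1 * (tvkr_rhs m omega a phi j s + -1 * tvkr_rhs m omega a theta j s).

Lemma pd_gap_increment (m : nat) (omega : nat -> R -> R) (a : nat -> nat -> R -> R)
  (phi theta : nat -> R -> R) (i j : nat) :
  is_solution m omega a phi -> is_solution m omega a theta -> (i < m)%nat -> (j < m)%nat ->
  forall x y, 0 <= x <= y ->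
  exists pr : Riemann_integrable (pd_gap_rate m omega a phi theta i j) x y,
    pd_gap phi theta i j y - pd_gap phi theta i j x = RiemannInt pr.
Proof.
  intros Hphi Htheta Hi Hj x y Hxy.
  destruct (solution_increment m omega a phi i Hphi Hi x y Hxy) as [p1 E1].
  destruct (solution_increment m omega a theta i Htheta Hi x y Hxy) as [p2 E2].
  destruct (solution_increment m omega a phi j Hphi Hj x y Hxy) as [p3 E3].
  destruct (solution_increment m omega a theta j Htheta Hj x y Hxy) as [p4 E4].
  set (p12 := RiemannInt_P10 (-1) p1 p2). set (p34 := RiemannInt_P10 (-1) p3 p4).
  set (pr := RiemannInt_P10 (-1) p12 p34
    : Riemann_integrable (pd_gap_rate m omega a phi theta i j) x y).
  exists pr.
  assert (V : RiemannInt pr = RiemannInt p12 + -1 * RiemannInt p34)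
    by exact (RiemannInt_P13 p12 p34 pr).
  rewrite V, (RiemannInt_P13 p1 p2 p12), (RiemannInt_P13 p3 p4 p34).
  unfold pd_gap. rewrite <- E1, <- E2, <- E3, <- E4. ring.
Qed.

Lemma Rabs_rhs_sub_le (m : nat) (omega : nat -> R -> R) (a : nat -> nat -> R -> R)
  (phi theta : nat -> R -> R) (i : nat) (s B : R) :
  (forall k, (k < m)%nat -> Rabs (a i k s) <= B) ->
  Rabs (tvkr_rhs m omega a phi i s - tvkr_rhs m omega a theta i s) <= INR m * (2 * B).
Proof.
  intros Ha. unfold tvkr_rhs.
  match goal with |- Rabs (?w + ?S1 - (?w + ?S2)) <= _ =>
    replace (w + S1 - (w + S2)) with (S1 - S2) by ring end.
  rewrite sumR_map_sub. rewrite <- (length_seq m 0) at 2. apply Rabs_sumR_map_le.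
  intros k Hk. apply in_seq in Hk. rewrite <- Rmult_minus_distr_l, Rabs_mult.
  assert (Hsin : Rabs (sin (phi k s - phi i s) - sin (theta k s - theta i s)) <= 2).
  { pose proof (SIN_bound (phi k s - phi i s)). pose proof (SIN_bound (theta k s - theta i s)).
    apply Rabs_le. lra. }
  pose proof (Ha k ltac:(lia)). pose proof (Rabs_pos (a i k s)). nra.
Qed.

Lemma Rabs_pd_gap_rate_le (m : nat) (omega : nat -> R -> R) (a : nat -> nat -> R -> R)
  (phi theta : nat -> R -> R) (i j : nat) (s B : R) :
  (i < m)%nat -> (j < m)%nat ->
  (forall k l, (k < m)%nat -> (l < m)%nat -> Rabs (a k l s) <= B) ->
  Rabs (pd_gap_rate m omega a phi theta i j s) <= 4 * B * INR m.
Proof.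
  intros Hi Hj Ha.
  pose proof (Rabs_rhs_sub_le m omega a phi theta i s B (fun k => Ha i k Hi)).
  pose proof (Rabs_rhs_sub_le m omega a phi theta j s B (fun k => Ha j k Hj)).
  unfold pd_gap_rate.
  match goal with |- Rabs (?x + -1 * ?y + -1 * (?z + -1 * ?w)) <= _ =>
    replace (x + -1 * y + -1 * (z + -1 * w)) with ((x - y) + - (z - w)) by ring end.
  eapply Rle_trans; [apply Rabs_triang |]. rewrite Rabs_Ropp. lra.
Qed.

Definition pd_dist (m : nat) (phi theta : nat -> R -> R) (t : R) : R :=
  listMax (map (fun p : nat * nat => Rabs (pd_gap phi theta (fst p) (snd p) t)) (all_pairs m)).

Lemma Rabs_pd_gap_le_dist (m : nat) (phi theta : nat -> R -> R) (k l : nat) (t : R) :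
  (k < m)%nat -> (l < m)%nat -> Rabs (pd_gap phi theta k l t) <= pd_dist m phi theta t.
Proof.
  intros Hk Hl. apply listMax_ge.
  apply (in_map (fun p : nat * nat => Rabs (pd_gap phi theta (fst p) (snd p) t)) _ (k, l)).
  apply In_all_pairs; assumption.
Qed.

Lemma pd_dist_nonneg (m : nat) (phi theta : nat -> R -> R) (t : R) :
  (0 < m)%nat -> 0 <= pd_dist m phi theta t.
Proof.
  intros Hm. eapply Rle_trans; [apply Rabs_pos | apply (Rabs_pd_gap_le_dist m _ _ 0 0); exact Hm].
Qed.

Lemma pd_dist_attained (m : nat) (phi theta : nat -> R -> R) (t : R) : (0 < m)%nat ->
  exists i j, (i < m)%nat /\ (j < m)%nat /\ pd_gap phi theta i j t = pd_dist m phi theta t.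
Proof.
  intros Hm.
  set (f := fun p : nat * nat => Rabs (pd_gap phi theta (fst p) (snd p) t)).
  assert (Hne : map f (all_pairs m) <> []).
  { intros E. pose proof (in_map f _ _ (In_all_pairs m 0 0 Hm Hm)) as Hin.
    rewrite E in Hin. destruct Hin. }
  destruct (proj1 (in_map_iff f _ _) (listMax_In _ Hne)) as [[k l] [Ekl Hkl]].
  destruct (all_pairs_bound m _ Hkl) as [Hk Hl]. simpl in Hk, Hl.
  unfold pd_dist. fold f. rewrite <- Ekl. unfold f. simpl.
  destruct (Rle_lt_dec 0 (pd_gap phi theta k l t)).
  - exists k, l. rewrite Rabs_right by lra. auto.
  - exists l, k. rewrite Rabs_left by lra. unfold pd_gap. repeat split; auto. ring.
Qed.

(** * A discrete Gronwall inequality *)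

Lemma le_of_le_plus_div (x y A : R) : (forall n : nat, (0 < n)%nat -> x <= y + A / INR n) -> x <= y.
Proof.
  intros H. destruct (Rle_lt_dec x y) as [Hle | Hlt]; [exact Hle | exfalso].
  destruct (INR_archimed (x - y) A ltac:(lra)) as [n Hn].
  assert (Hpos : 0 < INR (S n)) by (apply lt_0_INR; lia).
  assert (Hgt : INR (S n) * (x - y) > A) by (rewrite S_INR; lra).
  specialize (H (S n) ltac:(lia)).
  assert (A / INR (S n) < x - y).
  { apply (Rmult_lt_reg_l (INR (S n))); [exact Hpos |]. field_simplify; lra. }
  lra.
Qed.

Section DiscreteGronwall.
Variables (D Phi : R -> R) (X C : R).
Hypotheses (HX : 0 <= X) (HC : 0 <= C) (HD : forall s, 0 <= s -> 0 <= D s)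
  (HPhi : forall x y, 0 <= x <= y -> Phi y - Phi x <= X * (y - x))
  (Hstep : forall x y, 0 <= x <= y -> 0 < D y ->
     D y <= D x + D x * (Phi y - Phi x) + C * ((y - x) * (y - x))).

Lemma gronwall_grid (h : R) : 0 <= h -> forall k : nat,
  D (INR k * h)
  <= D 0 * exp (Phi (INR k * h) - Phi 0) + INR k * C * (h * h) * exp (X * (INR k * h)).
Proof.
  intros Hh k. induction k as [| k IH].
  - simpl. rewrite !Rmult_0_l, Rminus_diag, exp_0. lra.
  - rewrite S_INR. set (x := INR k * h) in IH |- *.
    replace ((INR k + 1) * h) with (x + h) by (unfold x; ring).
    assert (Hx : 0 <= x) by (unfold x; pose proof (pos_INR k); nra).
    set (G := Phi (x + h) - Phi x).
    set (E := INR k * C * (h * h)).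
    assert (HE : 0 <= E) by (unfold E; pose proof (pos_INR k); apply Rmult_le_pos; nra).
    assert (HG : G <= X * h)
      by (unfold G; replace h with (x + h - x) at 2 by ring; apply HPhi; lra).
    assert (Hshift : exp (Phi x - Phi 0) * exp G = exp (Phi (x + h) - Phi 0))
      by (rewrite <- exp_plus; f_equal; unfold G; ring).
    assert (Hgrow : exp (X * x) * exp G <= exp (X * (x + h)))
      by (rewrite <- exp_plus; apply exp_le_compat; nra).
    assert (Hone : 1 <= exp (X * (x + h))) by (pose proof (exp_ineq1_le (X * (x + h))); nra).
    assert (HD0 : 0 <= D 0 * exp (Phi (x + h) - Phi 0))
      by (apply Rmult_le_pos; [apply HD; lra | left; apply exp_pos]).
    assert (Hrest : 0 <= C * (h * h) * exp (X * (x + h)))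
      by (apply Rmult_le_pos; [nra | left; apply exp_pos]).
    replace ((INR k + 1) * C * (h * h) * exp (X * (x + h)))
      with (E * exp (X * (x + h)) + C * (h * h) * exp (X * (x + h))) by (unfold E; ring).
    destruct (Rle_lt_dec (D (x + h)) 0) as [Hle | Hgt]; [nra |].
    assert (Hexp_step : D (x + h) <= D x * exp G + C * (h * h)).
    { pose proof (Hstep x (x + h) ltac:(lra) Hgt) as Hs. fold G in Hs.
      replace (x + h - x) with h in Hs by ring.
      pose proof (exp_ineq1_le G). pose proof (HD x Hx). nra. }
    assert (D x * exp G <= (D 0 * exp (Phi x - Phi 0) + E * exp (X * x)) * exp G)
      by (apply Rmult_le_compat_r; [left; apply exp_pos | exact IH]).
    assert (E * (exp (X * x) * exp G) <= E * exp (X * (x + h)))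
      by (apply Rmult_le_compat_l; assumption).
    rewrite <- Hshift. nra.
Qed.

Lemma discrete_gronwall (t : R) : 0 <= t -> D t <= D 0 * exp (Phi t - Phi 0).
Proof.
  intros Ht. apply (le_of_le_plus_div _ _ (C * (t * t) * exp (X * t))). intros n Hn.
  assert (Hn' : 0 < INR n) by (apply lt_0_INR; exact Hn).
  assert (Hh : 0 <= t / INR n) by (apply Rmult_le_pos; [lra | left; apply Rinv_0_lt_compat, Hn']).
  pose proof (gronwall_grid (t / INR n) Hh n) as Hgrid.
  replace (INR n * (t / INR n)) with t in Hgrid by (field; lra).
  replace (C * (t * t) * exp (X * t) / INR n)
    with (INR n * C * (t / INR n * (t / INR n)) * exp (X * t)) by (field; lra).
  exact Hgrid.
Qed.

End DiscreteGronwall.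

(** * Contraction of the phase-difference gap *)

Section GapContraction.
Variables (m : nat) (omega : nat -> R -> R) (a : nat -> nat -> R -> R) (r B : R)
  (phi theta : nat -> R -> R) (Phi : R -> R).
Hypotheses (Hm : (0 < m)%nat) (Hr : 0 <= r < PI / 2) (HB : 0 <= B)
  (Ha : forall k l s, (k < m)%nat -> (l < m)%nat -> 0 <= s -> Rabs (a k l s) <= B)
  (Hdiag : forall k s, (k < m)%nat -> a k k s = 0)
  (Hphi : is_solution m omega a phi) (Htheta : is_solution m omega a theta)
  (Hphi_PD : forall s, 0 <= s -> PD_in m r phi s)
  (Htheta_PD : forall s, 0 <= s -> PD_in m r theta s)
  (HPhi : forall x y, 0 <= x <= y ->
     exists pr : Riemann_integrable (xi m a r) x y, Phi y - Phi x = RiemannInt pr).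

Local Notation D := (pd_dist m phi theta).
Local Notation gap := (pd_gap phi theta).
Local Notation L := (4 * B * INR m).
Local Notation X := ((2 + INR m) * B).

Lemma pd_gap_lipschitz (k l : nat) (x y : R) : (k < m)%nat -> (l < m)%nat -> 0 <= x <= y ->
  Rabs (gap k l y - gap k l x) <= L * (y - x).
Proof.
  intros Hk Hl Hxy. destruct (pd_gap_increment m omega a phi theta k l Hphi Htheta Hk Hl x y Hxy)
    as [pr ->].
  apply Rabs_RiemannInt_le_const; [lra |]. intros s Hs.
  apply Rabs_pd_gap_rate_le; [exact Hk | exact Hl |]. intros; apply Ha; auto; lra.
Qed.

Lemma pd_dist_lipschitz (x y : R) : 0 <= x <= y -> Rabs (D y - D x) <= L * (y - x).
Proof.
  intros Hxy. apply Rabs_le. split.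
  - destruct (pd_dist_attained m phi theta x Hm) as [i [j [Hi [Hj Eij]]]].
    pose proof (Rabs_le_inv _ _ (pd_gap_lipschitz i j x y Hi Hj Hxy)).
    pose proof (Rle_trans _ _ _ (Rle_abs _) (Rabs_pd_gap_le_dist m phi theta i j y Hi Hj)). lra.
  - destruct (pd_dist_attained m phi theta y Hm) as [i [j [Hi [Hj Eij]]]].
    pose proof (Rabs_le_inv _ _ (pd_gap_lipschitz i j x y Hi Hj Hxy)).
    pose proof (Rle_trans _ _ _ (Rle_abs _) (Rabs_pd_gap_le_dist m phi theta i j x Hi Hj)). lra.
Qed.

Lemma Phi_lipschitz (x y : R) : 0 <= x <= y -> Rabs (Phi y - Phi x) <= X * (y - x).
Proof.
  apply (primitive_lipschitz (xi m a r)); [exact HPhi |].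
  intros s Hs. apply Rabs_xi_le; [exact Hr | exact HB |]. intros k l Hk Hl. apply Ha; assumption.
Qed.

(* If the pair [(i, j)] realises the largest gap at time [y], then on [[x, y]]
   it is still extremal up to [L (y - x)], so the coupling estimate applies. *)
Lemma pd_gap_rate_le_at_max (i j : nat) (x y s : R) :
  (i < m)%nat -> (j < m)%nat -> 0 <= x <= y -> x <= s <= y ->
  gap i j y = D y -> 0 < D y ->
  pd_gap_rate m omega a phi theta i j s
  <= D y * xi m a r s + (6 * (1 + INR m) * B + X) * L * (y - x).
Proof.
  intros Hi Hj Hxy Hs Eij HDy.
  assert (Hs0 : 0 <= s) by lra.
  assert (Hij : i <> j) by (intros <-; unfold pd_gap in Eij; lra).
  assert (HL0 : 0 <= L) by (pose proof (pos_INR m); nra).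
  assert (Hnear : forall k l, (k < m)%nat -> (l < m)%nat -> gap k l s <= gap k l y + L * (y - x)).
  { intros k l Hk Hl. pose proof (Rabs_le_inv _ _ (pd_gap_lipschitz k l s y Hk Hl ltac:(lra))).
    assert (L * (y - s) <= L * (y - x)) by (apply Rmult_le_compat_l; lra). lra. }
  assert (Hgap : forall k l, (k < m)%nat -> (l < m)%nat -> gap k l y <= D y).
  { intros k l Hk Hl.
    exact (Rle_trans _ _ _ (Rle_abs _) (Rabs_pd_gap_le_dist m phi theta k l y Hk Hl)). }
  assert (Hmax : forall k, (k < m)%nat ->
    (phi k s - theta k s) - (phi i s - theta i s) <= L * (y - x)).
  { intros k Hk. pose proof (Hnear k i Hk Hi). pose proof (Hgap k j Hk Hj).
    replace (gap k i y) with (gap k j y - gap i j y) in * by (unfold pd_gap; ring).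
    unfold pd_gap in *. lra. }
  assert (Hmin : forall k, (k < m)%nat ->
    (phi j s - theta j s) - (phi k s - theta k s) <= L * (y - x)).
  { intros k Hk. pose proof (Hnear j k Hj Hk). pose proof (Hgap i k Hi Hk).
    replace (gap j k y) with (gap i k y - gap i j y) in * by (unfold pd_gap; ring).
    unfold pd_gap in *. lra. }
  assert (HL : 0 <= L * (y - x)) by (apply Rmult_le_pos; lra).
  pose proof (rhs_gap_le_xi m omega a r B s (L * (y - x)) phi theta i j Hr HB
    (fun k l Hk Hl => Ha k l s Hk Hl Hs0) (fun k Hk => Hdiag k s Hk)
    (PD_in_all m r phi s (proj1 Hr) (Hphi_PD s Hs0))
    (PD_in_all m r theta s (proj1 Hr) (Htheta_PD s Hs0))
    Hi Hj Hij HL Hmax Hmin) as Hcoupling.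
  assert (Hxi : xi m a r s * (gap i j s - D y) <= X * (L * (y - x))).
  { apply Rmult_le_Rabs.
    - apply Rabs_xi_le; [exact Hr | exact HB |]. intros k l Hk Hl. apply Ha; assumption.
    - rewrite <- Eij, Rabs_minus_sym. eapply Rle_trans; [apply pd_gap_lipschitz; auto; lra |].
      apply Rmult_le_compat_l; lra. }
  unfold pd_gap_rate. unfold pd_gap in Hxi. nra.
Qed.

Lemma pd_dist_step (x y : R) : 0 <= x <= y -> 0 < D y ->
  D y <= D x + D x * (Phi y - Phi x)
         + ((6 * (1 + INR m) * B + X) * L + L * X) * ((y - x) * (y - x)).
Proof.
  intros Hxy HDy.
  destruct (pd_dist_attained m phi theta y Hm) as [i [j [Hi [Hj Eij]]]].
  destruct (pd_gap_increment m omega a phi theta i j Hphi Htheta Hi Hj x y Hxy) as [pr Epr].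
  destruct (HPhi x y Hxy) as [prx Eprx].
  assert (Hint := RiemannInt_le_affine _ _ x y (D y) ((6 * (1 + INR m) * B + X) * L * (y - x))
    pr prx (proj2 Hxy) (fun s Hs => pd_gap_rate_le_at_max i j x y s Hi Hj Hxy ltac:(lra) Eij HDy)).
  rewrite <- Epr, <- Eprx, Eij in Hint.
  assert (Hgx : gap i j x <= D x)
    by exact (Rle_trans _ _ _ (Rle_abs _) (Rabs_pd_gap_le_dist m phi theta i j x Hi Hj)).
  assert (Hcross : (D y - D x) * (Phi y - Phi x) <= (L * (y - x)) * (X * (y - x)))
    by (apply Rmult_le_Rabs; [apply pd_dist_lipschitz | apply Phi_lipschitz]; exact Hxy).
  nra.
Qed.

End GapContraction.

Lemma uniform_coupling_bound (m : nat) (a : nat -> nat -> R -> R) :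
  (forall i j, (i < m)%nat -> (j < m)%nat -> bounded_on_nonneg (a i j)) ->
  exists B, 0 <= B /\
    forall k l s, (k < m)%nat -> (l < m)%nat -> 0 <= s -> Rabs (a k l s) <= B.
Proof.
  intros Ha.
  set (P := fun k B => forall l s, (l < m)%nat -> 0 <= s -> Rabs (a k l s) <= B).
  assert (Hmono : forall k B B', P k B -> B <= B' -> P k B')
    by (intros k B B' H HBB' l s Hl Hs; eapply Rle_trans; [apply H | ]; assumption).
  destruct (uniform_bound_fin m P Hmono) as [B [HB HP]].
  2: { exists B. split; [exact HB |]. intros k l s Hk. exact (HP k Hk l s). }
  intros k Hk.
  set (Q := fun l B => forall s, 0 <= s -> Rabs (a k l s) <= B).
  assert (HQmono : forall l B B', Q l B -> B <= B' -> Q l B')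
    by (intros l B B' H HBB' s Hs; eapply Rle_trans; [apply H | ]; assumption).
  destruct (uniform_bound_fin m Q HQmono) as [B [_ HQ]].
  - intros l Hl. exact (Ha k l Hk Hl).
  - exists B. intros l s Hl Hs. exact (HQ l Hl s Hs).
Qed.

Theorem theorem2 (m : nat) (omega : nat -> R -> R) (a : nat -> nat -> R -> R) (r : R) :
  (2 <= m)%nat ->
  (forall i, (i < m)%nat -> piecewise_continuous (omega i) /\ bounded_on_nonneg (omega i)) ->
  (forall i j, (i < m)%nat -> (j < m)%nat ->
     piecewise_continuous (a i j) /\ bounded_on_nonneg (a i j)) ->
  (forall i t, (i < m)%nat -> a i i t = 0) ->
  0 <= r < PI / 2 ->
  invariant_Ar m omega a r ->
  (exists T eta, 0 < T /\ 0 < eta /\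
     forall t, 0 <= t ->
       exists pr : Riemann_integrable (xi m a r) t (t + T),
         / T * RiemannInt pr <= - eta) ->
  PD_exp_stable m omega a r.
Proof.
  intros Hm _ Hreg Hdiag Hr Hinv [T [eta [HT [Heta Hwin]]]].
  assert (Hm0 : (0 < m)%nat) by lia.
  destruct (uniform_coupling_bound m a (fun i j Hi Hj => proj2 (Hreg i j Hi Hj))) as [B [HB Ha]].
  set (X := (2 + INR m) * B). assert (HX : 0 <= X) by (unfold X; pose proof (pos_INR m); nra).
  destruct (window_average_primitive (xi m a r) T eta X HT ltac:(lra) HX
    (fun s Hs => Rabs_xi_le m a r s B Hr HB (fun k l Hk Hl => Ha k l s Hk Hl Hs)) Hwin)
    as [Phi [HPhi Hdecay]].
  exists (exp ((eta + X) * T)), 1, eta. split; [apply exp_pos | split; [lra | split; [lra |]]].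
  intros phi theta Hphi Htheta Hphi0 Htheta0 t Ht i j Hi Hj.
  set (C := ((6 * (1 + INR m) * B + X) * (4 * B * INR m) + 4 * B * INR m * X)).
  assert (HC : 0 <= C) by (unfold C, X; pose proof (pos_INR m); apply Rplus_le_le_0_compat;
    repeat apply Rmult_le_pos; nra).
  assert (Hgron := discrete_gronwall (pd_dist m phi theta) Phi X C HX HC
    (fun s _ => pd_dist_nonneg m phi theta s Hm0)
    (fun x y Hxy => proj2 (Rabs_le_inv _ _ (Phi_lipschitz m a r B Phi Hr HB Ha HPhi x y Hxy)))
    (pd_dist_step m omega a r B phi theta Phi Hm0 Hr HB Ha Hdiag Hphi Htheta
       (fun s Hs => Hinv phi Hphi Hphi0 s Hs) (fun s Hs => Hinv theta Htheta Htheta0 s Hs) HPhi)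
    t ltac:(lra)).
  change (pd_dist m phi theta 0) with (init_PD_dist m phi theta) in Hgron.
  eapply Rle_trans; [exact (Rabs_pd_gap_le_dist m phi theta i j t Hi Hj) |].
  eapply Rle_trans; [exact Hgron |].
  replace (exp ((eta + X) * T) * init_PD_dist m phi theta * exp (- eta * t))
    with (init_PD_dist m phi theta * exp (- eta * t + (eta + X) * T)) by (rewrite exp_plus; ring).
  apply Rmult_le_compat_l; [exact (pd_dist_nonneg m phi theta 0 Hm0) |].
  apply exp_le_compat, Hdecay. lra.
Qed.
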